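(* Let $x\in V$ be a non-leaf vertex of $T$. If $y$ is a vertex lying strictly below $r(x)$ on the path $\pi(s,u_{H_x})$, then $s$ is connected to $H_x$ in $G\setminus\{x,y\}$.
   Context: $G=(V,E)$ is a connected graph with no cut vertex, $T$ a BFS tree rooted at $s$, $\pi(u,v)$ the $T$-path, $T_x$ the subtree at $x$, $V_x=V(T_x)\setminus\{x\}$. $x_h$ is the heavy child of $x$ (child with largest subtree, ties broken consistently). $\mathcal{C}_x$ is the set of connected components of $G[V_x]$, and $H_x$ is the one containing $x_h$. A fixed edge $(u_{H_x},v_{H_x})\in E$ with $v_{H_x}\in H_x$ and $u_{H_x}\notin V(T_x)$ is chosen. $R(x)=\{v\in V\setminus V(T_x): v\text{ has a neighbour in }H_x\}$ and $r(x)$ is the lowest common ancestor in $T$ of all vertices of $R(x)$ (so $r(x)$ lies on $\pi(s,u_{H_x})$). *)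

From mathcomp Require Import all_boot.
Set Implicit Arguments. Unset Strict Implicit. Unset Printing Implicit Defensive.

Definition induced (V : finType) (e : rel V) (A : {pred V}) : rel V :=
  fun a b => [&& a \in A, b \in A & e a b].

Definition simple_graph (V : finType) (e : rel V) : Prop :=
  symmetric e /\ irreflexive e.

Definition connected_graph (V : finType) (e : rel V) : Prop :=
  forall a b, connect e a b.

Definition no_cut_vertex (V : finType) (e : rel V) : Prop :=
  forall z a b, a != z -> b != z -> connect (induced e (predC1 z)) a b.

Definition is_dist (V : finType) (e : rel V) (s v : V) (n : nat) : Prop :=
  (exists2 p, path e s p & (last s p == v) && (size p == n)) /\
  (forall p, path e s p -> last s p = v -> n <= size p).

(* T, given by its parent function par, is a BFS (shortest-path) spanning tree
   of G rooted at s: par s = s, every non-root v is joined to its parent by an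
   edge of G, and the parent is one step closer to s in G. *)
Definition bfs_tree (V : finType) (e : rel V) (s : V) (par : V -> V) : Prop :=
  par s = s /\
  forall v, v != s ->
    e (par v) v /\ (forall n, is_dist e s v n.+1 -> is_dist e s (par v) n).

(* a is an ancestor of v in T (a = v allowed), i.e. a lies on pi(s, v). *)
Definition ancestor (V : finType) (par : V -> V) (a v : V) : bool :=
  fconnect par v a.

Definition children (V : finType) (par : V -> V) (x : V) : {set V} :=
  [set c | (par c == x) && (c != x)].

Definition subtree (V : finType) (par : V -> V) (x : V) : {set V} :=
  [set v | ancestor par x v].

Definition Vx (V : finType) (par : V -> V) (x : V) : {set V} :=
  subtree par x :\ x.

Definition heavy_child (V : finType) (par : V -> V) (x h : V) : Prop :=
  h \in children par x /\
  forall c, c \in children par x -> #|subtree par c| <= #|subtree par h|.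

Definition Hx (V : finType) (e : rel V) (par : V -> V) (x xh : V) : {set V} :=
  [set v | (v \in Vx par x) && connect (induced e (mem (Vx par x))) xh v].

Definition Rx (V : finType) (e : rel V) (par : V -> V) (x xh : V) : {set V} :=
  [set v | (v \notin subtree par x) && [exists w in Hx e par x xh, e v w]].

Definition is_lca (V : finType) (par : V -> V) (R : {set V}) (r : V) : Prop :=
  (forall v, v \in R -> ancestor par r v) /\
  (forall a, (forall v, v \in R -> ancestor par a v) -> ancestor par a r).

From mathcomp Require Import all_boot.

Set Implicit Arguments. Unset Strict Implicit. Unset Printing Implicit Defensive.

(** Since [y] lies strictly below the lowest common ancestor [r(x)] of [R(x)],
    some [v] in [R(x)] is not a descendant of [y]; as [v] lies outside [T_x],
    the tree path [pi(s, v)] avoids both [x] and [y].  Following it and then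
    the edge from [v] to its neighbour [w] in [H_x] connects [s] to [H_x] in
    [G \ {x, y}]; [w] itself is neither [x] nor [y], because [w] is in [V_x]
    while [y], an ancestor of [u_{H_x}], is outside [T_x]. *)

Lemma connect_is_dist (V : finType) (e : rel V) (s v : V) :
  connect e s v -> exists n, is_dist e s v n.
Proof.
move=> /connectP [p p_path p_last].
pose reach n := [exists t : n.-tuple V, path e s t && (last s t == v)].
have reach_size : exists n, reach n.
  exists (size p); apply/existsP; exists (in_tuple p).
  by rewrite /= p_path p_last eqxx.
have [n /existsP [t /andP [t_path t_last]] n_min] := ex_minnP reach_size.
exists n; split; first by exists t; rewrite // t_last size_tuple eqxx.
move=> q q_path q_last; apply: n_min; apply/existsP.
by exists (in_tuple q); rewrite /= q_path q_last eqxx.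
Qed.

Lemma bfs_tree_ancestor_root (V : finType) (e : rel V) (s : V) (par : V -> V) :
  connected_graph e -> bfs_tree e s par -> forall v, ancestor par s v.
Proof.
move=> conn [_ bfs] v; have [n] := connect_is_dist (conn s v).
elim: n v => [|n IHn] v [[p p_path /andP [p_last /eqP p_size]] n_min].
  by move: p_last; rewrite (size0nil p_size) => /eqP <-; apply: connect0.
have v_s : v != s by apply/eqP=> v_s; have := n_min [::] isT (esym v_s).
have [_ /(_ n) dist_par] := bfs v v_s.
have /IHn par_anc : is_dist e s (par v) n.
  by apply: dist_par; split=> //; exists p; rewrite // p_last p_size eqxx.
exact: connect_trans (fconnect1 par v) par_anc.
Qed.

Section RootedTree.

Variables (V : finType) (par : V -> V) (s : V).
Hypothesis par_root : par s = s.
Hypothesis ancestor_root : forall v, ancestor par s v.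

Lemma ancestor_antisym a b : ancestor par a b -> ancestor par b a -> a = b.
Proof.
move=> /iter_findex ba /iter_findex ab.
set k := findex par b a in ba; set j := findex par a b in ab.
have period t : iter (t * (j + k)) par b = b.
  by elim: t => [|t IHt] //=; rewrite mulSn iterD IHt iterD ba ab.
have bs := iter_findex (ancestor_root b); set m := findex par b s in bs.
case jk: (j + k) => [|l].
  by move: jk => /eqP; rewrite addn_eq0 => /andP [_ /eqP k0]; rewrite -ba k0.
(* [b] lies on a cycle of [par], yet iterating [par] from [b] ends in the fixed point [s]. *)
have b_root : b = s.
  rewrite -(period m) jk -(subnK (leq_pmulr m (ltn0Sn l))).
  by rewrite iterD bs iter_fix.
by rewrite -ba b_root iter_fix.
Qed.

Lemma strictly_below_lca (R : {set V}) r y :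
  is_lca par R r -> ancestor par r y -> y != r ->
  exists2 v, v \in R & ~~ ancestor par y v.
Proof.
move=> [_ lca_least] ry yr.
have [/existsP [v /andP [vR y_v]] | /existsPn none_below] :=
  boolP [exists v in R, ~~ ancestor par y v]; first by exists v.
case/eqP: yr; apply: (ancestor_antisym _ ry); apply: lca_least => v vR.
by move: (none_below v); rewrite vR negbK.
Qed.

Variable e : rel V.
Hypothesis tree_edge : forall v, v != s -> e (par v) v.

Lemma connect_tree_path (A : {pred V}) v :
  (forall a, ancestor par a v -> a \in A) -> connect (induced e A) s v.
Proof.
move=> anc_A; rewrite -(iter_findex (ancestor_root v)).
elim: (findex par v s) => [|k IHk] /=; first exact: connect0.
have [k_s | k_s] := eqVneq (iter k par v) s; first by rewrite k_s par_root -k_s.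
apply: connect_trans IHk; apply: connect1.
rewrite /induced !anc_A ?tree_edge //; first exact: fconnect_iter.
exact: (fconnect_iter par k.+1).
Qed.

End RootedTree.

Theorem mainTheorem12 (V : finType) (e : rel V) (s : V) (par : V -> V)
    (x xh uH vH r y : V) :
  simple_graph e -> connected_graph e -> no_cut_vertex e ->
  bfs_tree e s par ->
  (* x is not a leaf of T, and xh is its heavy child *)
  children par x != set0 ->
  heavy_child par x xh ->
  (* the fixed edge (u_{H_x}, v_{H_x}) *)
  e uH vH -> vH \in Hx e par x xh -> uH \notin subtree par x ->
  (* r = r(x) *)
  is_lca par (Rx e par x xh) r ->
  (* y lies strictly below r(x) on pi(s, u_{H_x}) *)
  ancestor par y uH -> ancestor par r y -> y != r ->
  (* s is connected to H_x in G \ {x, y} *)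
  exists2 w, w \in Hx e par x xh &
    connect (induced e [predC pred2 x y]) s w.
Proof.
move=> _ conn _ bfs _ _ _ _ uH_out r_lca y_uH r_y y_r.
have root_anc := bfs_tree_ancestor_root conn bfs.
have [par_root tree] := bfs.
have [v] := strictly_below_lca par_root root_anc r_lca r_y y_r.
rewrite inE => /andP [v_out /existsP [w /andP [wH e_vw]]] y_v.
have x_y : ~~ ancestor par x y.
  by apply: contra uH_out; rewrite inE; apply: connect_trans y_uH.
have w_ok : w \in [predC pred2 x y].
  move: wH; rewrite !inE => /andP [/andP [w_x x_w] _].
  by rewrite (negbTE w_x); apply: contraNneq x_y => <-.
have anc_ok a : ancestor par a v -> a \in [predC pred2 x y].
  move=> a_v; rewrite !inE negb_or; apply/andP; split.
    by apply: contraNneq v_out => <-; rewrite inE.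
  by apply: contraNneq y_v => <-.
have tree_edge u : u != s -> e (par u) u by case/tree.
exists w => //.
apply: connect_trans (connect_tree_path par_root root_anc tree_edge anc_ok) _.
by apply: connect1; rewrite /induced e_vw w_ok anc_ok //; apply: connect0.
Qed.
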